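(* Let $A$ be a differential $K$-algebra without exponents nor logarithm and let $M$ be a differential module over $A$ that is finite free as an $A$-module. Then $M$ is regular singular if and only if $M$ has an $A$-basis in which the matrix of the connection has all its entries in $K$. Moreover, the scalar extension functor $N\mapsto N\otimes_{K[t,t^{-1}]}A$ (with connection $\nabla\otimes1+1\otimes\partial$) is an equivalence of categories $\mathrm{Reg}(K[t,t^{-1}])\xrightarrow{\sim}\mathrm{Reg}(A)$, where $K[t,t^{-1}]$ carries the derivation $t\frac{d}{dt}$.
   Context: $K$ is an algebraically closed field of characteristic $0$. $K[t^K]$ is the group algebra over $K$ of $(K,+)$, with $K$-basis $t^a$ ($a\in K$), $t^at^b=t^{a+b}$; $K[t,t^{-1}]$ is identified with the span of $t^n$, $n\in\mathbb{Z}$. Fix a set $\widetilde{K/\mathbb{Z}}\subset K$ of representatives of $K/\mathbb{Z}$ with $0\in\widetilde{K/\mathbb{Z}}$. $A$ is a commutative ring with unit containing $K[t,t^{-1}]$ as a subring, with a derivation $\partial$ extending $t\frac{d}{dt}$. $A[t^K]:=A\otimes_{K[t,t^{-1}]}K[t^K]$, $E_A:=A[t^K][\ell]$ ($\ell$ an indeterminate), with derivation $\partial$ extending that of $A$, $\partial(t^a)=at^a$, $\partial(\ell)=1$. $A$ is a differential $K$-algebra without exponents nor logarithm if $\{f\in A:\partial^2 f=0\}=K$ and, for every $a\in\widetilde{K/\mathbb{Z}}\setminus\{0\}$, $\partial f+af=0$ ($f\in A$) implies $f=0$. A differential module over a differential ring $(B,\partial)$ is a $B$-module $M$ with additive $\nabla$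 satisfying $\nabla(fm)=\partial(f)m+f\nabla(m)$; it is trivial if isomorphic to a direct sum of copies of $(B,\partial)$. If $M$ is free with basis $b_1,\dots,b_n$ and $\nabla(b_i)=\sum_j g_{j,i}b_j$, the matrix of the connection in this basis is $G=(g_{i,j})$. $M$ is regular singular if $M$ is finite free over $A$ and $M\otimes_AE_A$ (connection $\nabla\otimes1+1\otimes\partial$) is trivial as a differential module over $E_A$; $\mathrm{Reg}(A)$ is the full subcategory of differential modules over $A$ formed by regular singular ones (with the same definition for $A=K[t,t^{-1}]$). *)

From HB Require Import structures.
From mathcomp Require Import all_boot all_order all_algebra.
Set Implicit Arguments. Unset Strict Implicit. Unset Printing Implicit Defensive.
Import Order.TTheory GRing.Theory Num.Theory.
Local Open Scope ring_scope.

Definition derivation (R : pzRingType) (d : R -> R) : Prop :=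
  (forall x y, d (x + y) = d x + d y) /\ (forall x y, d (x * y) = d x * y + x * d y).

Definition tpow (R : pzRingType) (t tinv : R) (n : int) : R :=
  match n with Posz k => t ^+ k | Negz k => tinv ^+ k.+1 end.

(** (L, t, tinv) is (a model of) the Laurent polynomial ring K[t,t^{-1}]:
    t is invertible with inverse tinv and the t^n (n in Z) form a K-basis. *)
Definition laurent_ring (K : fieldType) (L : comAlgType K) (t tinv : L) : Prop :=
  t * tinv = 1 /\
  (forall (s : seq int) (c : int -> K), uniq s ->
     \sum_(n <- s) c n *: tpow t tinv n = 0 -> forall n, n \in s -> c n = 0) /\
  (forall x : L, exists (s : seq int) (c : int -> K), x = \sum_(n <- s) c n *: tpow t tinv n).

(** d is the derivation t d/dt on L (K-linear derivation with d t = t). *)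
Definition is_t_ddt (K : fieldType) (L : comAlgType K) (t : L) (d : L -> L) : Prop :=
  derivation d /\ (forall (k : K) x, d (k *: x) = k *: d x) /\ d t = t.

Definition reps_KmodZ (K : fieldType) (Rep : pred K) : Prop :=
  Rep 0 /\
  (forall x : K, exists (r : K) (n : int), Rep r /\ x = r + n%:~R) /\
  (forall (r1 r2 : K) (n : int), Rep r1 -> Rep r2 -> r1 = r2 + n%:~R -> r1 = r2).

(** (E, j, tp, l, dE) is (a model of) the differential ring
    E_R = (R (x)_{K[t,t^-1]} K[t^K])[l] over the differential K-algebra (R, dR),
    where tR is the image of t in R: E is a commutative R-algebra (via j),
    tp a = t^a, with t^{a+b} = t^a t^b, t^0 = 1, t^1 = t, and the family
    t^a l^k (a in Rep, k in N) is an R-basis of E; dE extends dR,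
    dE(t^a) = a t^a, dE(l) = 1.  These properties determine E_R up to
    unique isomorphism. *)
Definition E_model (K : fieldType) (Rep : pred K) (R : comAlgType K) (tR : R)
    (dR : R -> R) (E : comNzRingType) (j : {rmorphism R -> E}) (tp : K -> E)
    (l : E) (dE : E -> E) : Prop :=
  [/\ tp 0 = 1, (forall a b, tp (a + b) = tp a * tp b) & tp 1 = j tR] /\
  (forall (s : seq K) (N : nat) (f : K -> nat -> R), uniq s -> all Rep s ->
     \sum_(a <- s) \sum_(k < N) j (f a k) * tp a * l ^+ k = 0 ->
     forall a k, a \in s -> (k < N)%N -> f a k = 0) /\
  (forall e : E, exists (s : seq K) (N : nat) (f : K -> nat -> R),
     [/\ uniq s, all Rep s & e = \sum_(a <- s) \sum_(k < N) j (f a k) * tp a * l ^+ k]) /\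
  [/\ derivation dE, (forall r, dE (j r) = j (dR r)),
      (forall a, dE (tp a) = j (a%:A) * tp a) & dE l = 1].

Definition is_diffmod (R : comNzRingType) (dR : R -> R) (M : lmodType R)
    (nabla : M -> M) : Prop :=
  (forall x y, nabla (x + y) = nabla x + nabla y) /\
  (forall (a : R) m, nabla (a *: m) = dR a *: m + a *: nabla m).

Definition is_basis (R : comNzRingType) (M : lmodType R) (n : nat) (b : 'I_n -> M) : Prop :=
  (forall c : 'I_n -> R, \sum_i c i *: b i = 0 -> forall i, c i = 0) /\
  (forall m : M, exists c : 'I_n -> R, m = \sum_i c i *: b i).

Definition finite_free (R : comNzRingType) (M : lmodType R) : Prop :=
  exists n (b : 'I_n -> M), is_basis b.

Definition conn_matrix (R : comNzRingType) (M : lmodType R) (nabla : M -> M)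
    (n : nat) (b : 'I_n -> M) (G : 'M[R]_n) : Prop :=
  forall i, nabla (b i) = \sum_j G j i *: b j.

(** The free differential module (E^n, dE + G) is trivial: isomorphic to a
    (finite) direct sum of copies of (E, dE), i.e. there is an E-linear
    isomorphism P : E^m -> E^n (inverse Q) sending the standard basis to
    horizontal vectors. *)
Definition trivial_free (E : comNzRingType) (dE : E -> E) (n : nat) (G : 'M[E]_n) : Prop :=
  exists m (P : 'M[E]_(n, m)) (Q : 'M[E]_(m, n)),
    [/\ P *m Q = 1%:M, Q *m P = 1%:M & map_mx dE P + G *m P = 0].

(** Regular singularity of the free differential module (R^n, dR + G):
    its scalar extension to E_R, which is (E^n, dE + j(G)), is trivial. *)
Definition regsing_mx (R : comNzRingType) (E : comNzRingType) (j : R -> E)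
    (dE : E -> E) (n : nat) (G : 'M[R]_n) : Prop :=
  trivial_free dE (map_mx j G).

Definition regular_singular (R : comNzRingType) (E : comNzRingType) (j : R -> E)
    (dE : E -> E) (M : lmodType R) (nabla : M -> M) : Prop :=
  exists n (b : 'I_n -> M) (G : 'M[R]_n),
    [/\ is_basis b, conn_matrix nabla b G & regsing_mx j dE G].

(** Morphisms of free differential modules (R^n1, dR + G1) -> (R^n2, dR + G2):
    matrices F with dR(F) + G2 F = F G1. *)
Definition horizontal (R : comNzRingType) (dR : R -> R) (n1 n2 : nat)
    (G1 : 'M[R]_n1) (G2 : 'M[R]_n2) (F : 'M[R]_(n2, n1)) : Prop :=
  map_mx dR F + G2 *m F = F *m G1.

From HB Require Import structures.
From mathcomp Require Import all_boot all_order all_algebra.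
From mathcomp Require Import ring.
From Stdlib Require Import ClassicalEpsilon.
Import GRing.Theory.
Local Open Scope ring_scope.
Set Implicit Arguments. Unset Strict Implicit. Unset Printing Implicit Defensive.

(* A matrix [G] is regular singular when [dE + G] has a fundamental matrix [P] over
   [E = R[t^K][l]]. Expand [P] in the basis [t^a l^k]: multiplying the [t^a]-coefficient
   by [a], or shifting the [l]-degree down, commutes with [dE + G], so these operators act
   on [P] through constant matrices [T] and [D] (the constants of [E] are [K] because [R]
   has neither exponents nor logarithm). The Lagrange projectors of [T] then show that
   every coefficient of [P] factors through [U = sum_a P_(a,0)], which is a gauge
   transformation from the constant matrix [-(T + D)] to [G]. Conversely a constant
   system, triangularized over the algebraically closed [K], is solved by matrices whose
   entries are [K]-combinations of the [t^b l^k]. Everything also holds over [K[t,t^-1]];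
   a horizontal morphism between constant systems over [A] is conjugate to a constant
   matrix by such solutions, so it equals its own constant term and has its entries in
   [K[t,t^-1]]: this gives full faithfulness of the scalar extension. *)

(** * Derivations and horizontal morphisms *)

Section Derivation.
Variables (R : comNzRingType) (d : R -> R).
Hypothesis hd : derivation d.

Lemma derD x y : d (x + y) = d x + d y. Proof. exact: hd.1. Qed.
Lemma derM x y : d (x * y) = d x * y + x * d y. Proof. exact: hd.2. Qed.

Lemma der0 : d 0 = 0.
Proof. by apply: (addrI (d 0)); rewrite -derD !addr0. Qed.

Lemma derN x : d (- x) = - d x.
Proof. by apply/eqP; rewrite -subr_eq0 opprK -derD addNr der0. Qed.

Lemma derB x y : d (x - y) = d x - d y. Proof. by rewrite derD derN. Qed.

Lemma der1 : d 1 = 0.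
Proof.
have h := derM 1 1; rewrite !mulr1 mul1r in h.
by apply: (addrI (d 1)); rewrite addr0 -h.
Qed.

Lemma der_sum I (r : seq I) (P : pred I) (F : I -> R) :
  d (\sum_(i <- r | P i) F i) = \sum_(i <- r | P i) d (F i).
Proof.
elim: r => [|x r IH]; first by rewrite !big_nil der0.
by rewrite !big_cons; case: (P x); rewrite ?derD IH.
Qed.

Lemma der_nat n : d n%:R = 0.
Proof. by elim: n => [|n IH]; rewrite ?der0 // -addn1 natrD derD IH der1 addr0. Qed.

Lemma der_natM n x : d (n%:R * x) = n%:R * d x.
Proof. by rewrite derM der_nat mul0r add0r. Qed.

Lemma derX x k : d (x ^+ k.+1) = k.+1%:R * x ^+ k * d x.
Proof.
elim: k => [|k IH]; first by rewrite expr1 expr0 mulr1 mul1r.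
rewrite exprS derM IH exprS -[k.+2]addn1 natrD; ring.
Qed.

Lemma der_mulmx m n p (X : 'M[R]_(m, n)) (Y : 'M[R]_(n, p)) :
  map_mx d (X *m Y) = map_mx d X *m Y + X *m map_mx d Y.
Proof.
apply/matrixP => i k; rewrite !mxE der_sum -big_split /=.
by apply: eq_bigr => c _; rewrite !mxE derM.
Qed.

Lemma der_addmx m n (X Y : 'M[R]_(m, n)) : map_mx d (X + Y) = map_mx d X + map_mx d Y.
Proof. by apply/matrixP => i k; rewrite !mxE derD. Qed.

Lemma der_summx m n I (r : seq I) (F : I -> 'M[R]_(m, n)) :
  map_mx d (\sum_(i <- r) F i) = \sum_(i <- r) map_mx d (F i).
Proof.
elim: r => [|x r IH]; first by rewrite !big_nil; apply/matrixP => i k; rewrite !mxE der0.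
by rewrite !big_cons der_addmx IH.
Qed.

Lemma der_mx0 m n : map_mx d (0 : 'M_(m, n)) = 0.
Proof. by apply/matrixP => i k; rewrite !mxE der0. Qed.

Lemma der_scalar_mx n (c : R) : map_mx d (c%:M : 'M_n) = (d c)%:M.
Proof. by apply/matrixP => i k; rewrite !mxE; case: (i == k); rewrite ?der0. Qed.

Lemma horizontalE m n (G1 : 'M[R]_m) (G2 : 'M[R]_n) F :
  horizontal d G1 G2 F -> map_mx d F = F *m G1 - G2 *m F.
Proof. by move=> hF; rewrite -hF addrK. Qed.

Lemma horizontal0E n p (G : 'M[R]_n) (X : 'M[R]_(n, p)) :
  horizontal d 0 G X <-> map_mx d X + G *m X = 0.
Proof. by rewrite /horizontal mulmx0. Qed.

Lemma horizontal_mul n1 n2 n3 (G1 : 'M[R]_n1) (G2 : 'M[R]_n2) (G3 : 'M[R]_n3) F1 F2 :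
  horizontal d G2 G3 F2 -> horizontal d G1 G2 F1 -> horizontal d G1 G3 (F2 *m F1).
Proof.
move=> /horizontalE h2 /horizontalE h1.
rewrite /horizontal der_mulmx h1 h2 mulmxBl mulmxBr !mulmxA.
by rewrite addrAC subrK addrC subrK.
Qed.

Lemma horizontal_inv n1 n2 (G1 : 'M[R]_n1) (G2 : 'M[R]_n2) P Q :
  P *m Q = 1%:M -> Q *m P = 1%:M -> horizontal d G1 G2 P -> horizontal d G2 G1 Q.
Proof.
move=> PQ QP /horizontalE dP.
have dQP : map_mx d Q *m P = Q *m G2 *m P - G1.
  have : map_mx d (Q *m P) = 0 by rewrite QP der_scalar_mx der1 raddf0.
  rewrite der_mulmx dP mulmxBr !mulmxA QP mul1mx => /eqP.
  by rewrite addr_eq0 opprB => /eqP.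
rewrite /horizontal -[map_mx d Q]mulmx1 -PQ mulmxA dQP mulmxBl -!mulmxA PQ mulmx1.
by rewrite subrK.
Qed.
End Derivation.

Lemma horizontal_map (R S : comNzRingType) (dR : R -> R) (dS : S -> S) (f : {rmorphism R -> S})
    n1 n2 (G1 : 'M[R]_n1) (G2 : 'M[R]_n2) F :
  (forall x, dS (f x) = f (dR x)) -> horizontal dR G1 G2 F ->
  horizontal dS (map_mx f G1) (map_mx f G2) (map_mx f F).
Proof.
move=> hf hF; rewrite /horizontal -!map_mxM -hF map_mxD; congr (_ + _).
by apply/matrixP => i k; rewrite !mxE hf.
Qed.

Definition gauge_equivalent (R : comNzRingType) (d : R -> R) n (G1 G2 : 'M[R]_n) :=
  exists U V : 'M[R]_n, [/\ U *m V = 1%:M, V *m U = 1%:M & horizontal d G1 G2 U].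

Lemma gauge_equivalent_map (R S : comNzRingType) (dR : R -> R) (dS : S -> S)
    (f : {rmorphism R -> S}) n (G1 G2 : 'M[R]_n) :
  (forall x, dS (f x) = f (dR x)) -> gauge_equivalent dR G1 G2 ->
  gauge_equivalent dS (map_mx f G1) (map_mx f G2).
Proof.
move=> hf [U [V [UV VU hU]]]; exists (map_mx f U), (map_mx f V).
by rewrite -!map_mxM UV VU !map_mx1; split => //; apply: horizontal_map.
Qed.

Section Lagrange.
Variables (K : fieldType) (R : comAlgType K).

Definition lagrange_mx n (s : seq K) (T : 'M[K]_n) (a : K) : 'M[K]_n :=
  \prod_(b <- s | b != a) ((a - b)^-1 *: (T - b%:M)).

Lemma lagrange_mx_eigen m n (s : seq K) (T : 'M[K]_n) (w : 'M[R]_(m, n)) a c :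
  w *m map_mx (in_alg R) T = c%:A *: w -> c \in s ->
  w *m map_mx (in_alg R) (lagrange_mx s T a) = if c == a then w else 0.
Proof.
move=> wT cs.
have wfac b : w *m map_mx (in_alg R) ((a - b)^-1 *: (T - b%:M)) = ((a - b)^-1 * (c - b))%:A *: w.
  rewrite map_mxZ -scalemxAr map_mxB mulmxBr wT map_scalar_mx mul_mx_scalar -scalerBl scalerA.
  by rewrite -!in_algE -rmorphB -rmorphM.
have wprod (r : seq K) : w *m map_mx (in_alg R) (\prod_(b <- r | b != a) ((a - b)^-1 *: (T - b%:M))) =
    (\prod_(b <- r | b != a) ((a - b)^-1 * (c - b)))%:A *: w.
  elim: r => [|b r IH]; first by rewrite !big_nil map_mx1 mulmx1 !scale1r.
  rewrite !big_cons; case: ifP => // _.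
  by rewrite -mulmxE map_mxM mulmxA wfac -scalemxAl IH scalerA -in_algE -rmorphM mulrC.
rewrite /lagrange_mx wprod; case: eqP => [->|/eqP ca].
  by rewrite big1 ?scale1r // => b hb; rewrite mulVf // subr_eq0 eq_sym.
rewrite (big_rem c) //= ca subrr mulr0 mul0r.
by rewrite -in_algE rmorph0 scale0r.
Qed.

Lemma lagrange_mx_sum m n (s : seq K) (T : 'M[K]_n) (W : K -> 'M[R]_(m, n)) a :
  uniq s -> a \in s -> (forall c, W c *m map_mx (in_alg R) T = c%:A *: W c) ->
  (\sum_(c <- s) W c) *m map_mx (in_alg R) (lagrange_mx s T a) = W a.
Proof.
move=> us sa WT; rewrite mulmx_suml big_seq.
under eq_bigr => c cs do rewrite (lagrange_mx_eigen a (WT c) cs).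
by rewrite -big_seq (bigD1_seq a) //= eqxx big1 ?addr0 // => c /negbTE ->.
Qed.

Hypothesis charK0 : [pchar K] =i pred0.

(* [T] and [D] act on the [W a k] as [a] and as the shift [k -> k - 1]: the Lagrange
   projectors of [T] recover [W a 0] from [\sum_c W c 0], and [D] climbs in [k]. *)
Lemma lagrange_taylor_factor m n (s : seq K) (W : K -> nat -> 'M[R]_(m, n)) (T D : 'M[K]_n) :
  uniq s -> (forall a k, a%:A *: W a k = W a k *m map_mx (in_alg R) T) ->
  (forall a k, k.+1%:R *: W a k.+1 = W a k *m map_mx (in_alg R) D) ->
  forall a k, a \in s -> exists M, W a k = (\sum_(c <- s) W c 0%N) *m M.
Proof.
move=> us hT hD a k sa; elim: k => [|k [M hM]].
  by exists (map_mx (in_alg R) (lagrange_mx s T a)); rewrite lagrange_mx_sum // => c; rewrite hT.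
exists (((k.+1%:R : K)^-1)%:A *: (M *m map_mx (in_alg R) D)).
rewrite -scalemxAr mulmxA -hM -hD scalerA -in_algE -[X in _ * X](rmorph_nat (in_alg R)).
by rewrite -rmorphM mulVf ?rmorph1 ?scale1r // (pcharf0P _).1.
Qed.
End Lagrange.

Lemma downward_ind (P : nat -> Prop) N : (forall k, (N <= k)%N -> P k) ->
  (forall k, P k.+1 -> P k) -> forall k, P k.
Proof.
move=> hN hS k; move Hd : (N - k)%N => d; elim: d k Hd => [|d IH] k Hd.
  by apply: hN; rewrite -subn_eq0 Hd.
by apply: hS; apply: IH; rewrite subnS Hd.
Qed.

Lemma pchar0_natr_inj (F : fieldType) : [pchar F] =i pred0 -> injective (fun n : nat => n%:R : F).
Proof.
move=> hF m n; wlog lemn : m n / (m <= n)%N.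
  by move=> hw; case/orP: (leq_total m n) => /hw // h /esym /h.
move=> /eqP; rewrite eq_sym -subr_eq0 -natrB // (pcharf0P _).1 // subn_eq0 => lenm.
by apply/eqP; rewrite eqn_leq lemn.
Qed.

Definition without_logarithm (K : fieldType) (R : comAlgType K) (dR : R -> R) :=
  forall f : R, dR (dR f) = 0 <-> exists c : K, f = c%:A.

Definition without_exponents (K : fieldType) (Rep : pred K) (R : comAlgType K) (dR : R -> R) :=
  forall (a : K) (f : R), Rep a -> a != 0 -> dR f + a *: f = 0 -> f = 0.

(** * Coefficients in [E_R] and the constants of [E_R] *)

Section EModel.
Variables (K : fieldType) (Rep : pred K) (R : comAlgType K) (tR : R) (dR : R -> R)
  (E : comNzRingType) (j : {rmorphism R -> E}) (tp : K -> E) (l : E) (dE : E -> E).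
Hypothesis hE : E_model Rep tR dR j tp l dE.

Lemma tp0 : tp 0 = 1. Proof. by case: hE => [[]]. Qed.
Lemma tpD a b : tp (a + b) = tp a * tp b. Proof. by case: hE => [[]]. Qed.
Lemma tp1 : tp 1 = j tR. Proof. by case: hE => [[]]. Qed.
Lemma derivation_dE : derivation dE. Proof. by case: hE => _ [_ [_ []]]. Qed.
Lemma dE_j r : dE (j r) = j (dR r). Proof. by case: hE => _ [_ [_ []]]. Qed.
Lemma dE_tp a : dE (tp a) = j a%:A * tp a. Proof. by case: hE => _ [_ [_ []]]. Qed.
Lemma dE_l : dE l = 1. Proof. by case: hE => _ [_ [_ []]]. Qed.

Definition Esum (s : seq K) (N : nat) (F : K -> nat -> R) : E :=
  \sum_(a <- s) \sum_(k < N) j (F a k) * tp a * l ^+ k.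

Definition supported (s : seq K) (N : nat) (F : K -> nat -> R) :=
  forall a k, F a k != 0 -> (a \in s) && (k < N)%N.

Lemma supported0 s N F a k : supported s N F -> ~~ ((a \in s) && (k < N)%N) -> F a k = 0.
Proof. by move=> sF h; apply/eqP; apply: contraNT h; apply: sF. Qed.

Lemma Esum_widen s s' N N' F : uniq s -> uniq s' -> {subset s <= s'} -> (N <= N')%N ->
  supported s N F -> Esum s N F = Esum s' N' F.
Proof.
move=> us us' ss' NN' sF; rewrite /Esum.
have inner a : \sum_(k < N') j (F a k) * tp a * l ^+ k =
    if a \in s then \sum_(k < N) j (F a k) * tp a * l ^+ k else 0.
  case: ifP => ha.
    rewrite (big_ord_widen N' (fun k => j (F a k) * tp a * l ^+ k) NN') [RHS]big_mkcond.
    apply: eq_bigr => k _; case: ifP => // hk.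
    by rewrite (supported0 sF) ?ha ?hk // rmorph0 !mul0r.
  by apply: big1 => k _; rewrite (supported0 sF) ?ha // rmorph0 !mul0r.
rewrite (eq_bigr _ (fun a _ => inner a)) -big_mkcond -big_filter.
apply: perm_big; apply: uniq_perm => //; first exact: filter_uniq.
by move=> a; rewrite mem_filter; case: (boolP (a \in s)) => // /ss' ->.
Qed.

Lemma Esum_eq0 s N F : uniq s -> all Rep s -> supported s N F -> Esum s N F = 0 ->
  forall a k, F a k = 0.
Proof.
move=> us rs sF h0 a k; case: (boolP ((a \in s) && (k < N)%N)) => [/andP[ha hk]|h].
  by have [_ [hi _]] := hE; apply: (hi s N F us rs h0).
exact: supported0 sF h.
Qed.

Lemma EsumD s N F G : Esum s N (fun a k => F a k + G a k) = Esum s N F + Esum s N G.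
Proof.
rewrite /Esum -big_split; apply: eq_bigr => a _; rewrite -big_split.
by apply: eq_bigr => k _; rewrite rmorphD !mulrDl.
Qed.

Lemma EsumB s N F G : Esum s N (fun a k => F a k - G a k) = Esum s N F - Esum s N G.
Proof.
rewrite /Esum -sumrB; apply: eq_bigr => a _; rewrite -sumrB.
by apply: eq_bigr => k _; rewrite rmorphB !mulrBl.
Qed.

Lemma Esum_exists e : exists x : seq K * nat * (K -> nat -> R),
  [/\ uniq x.1.1, all Rep x.1.1 & e = Esum x.1.1 x.1.2 x.2].
Proof. by have [_ [_ [/(_ e) [s [N [f [? ? ->]]]] _]]] := hE; exists (s, N, f). Qed.

Definition Erep e := proj1_sig (constructive_indefinite_description _ (Esum_exists e)).
Definition Esupp e := (Erep e).1.1.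
Definition Edeg e := (Erep e).1.2.

(* The coefficient of [t^a l^k] in [e]; zero when [a] is not a representative. *)
Definition Ecoef e a k := if (a \in Esupp e) && (k < Edeg e)%N then (Erep e).2 a k else 0.

Lemma ErepP e : [/\ uniq (Esupp e), all Rep (Esupp e) & e = Esum (Esupp e) (Edeg e) (Erep e).2].
Proof. exact: (proj2_sig (constructive_indefinite_description _ (Esum_exists e))). Qed.

Lemma Esupp_uniq e : uniq (Esupp e). Proof. by case: (ErepP e). Qed.
Lemma Esupp_Rep e : all Rep (Esupp e). Proof. by case: (ErepP e). Qed.

Lemma Ecoef_supported e : supported (Esupp e) (Edeg e) (Ecoef e).
Proof. by move=> a k; rewrite /Ecoef; case: ifP => //; rewrite eqxx. Qed.

Lemma EcoefE e : e = Esum (Esupp e) (Edeg e) (Ecoef e).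
Proof.
case: (ErepP e) => _ _ {1}->; rewrite /Esum /Ecoef.
rewrite big_seq_cond [RHS]big_seq_cond; apply: eq_bigr => a /andP[ha _].
by apply: eq_bigr => k _; rewrite ha ltn_ord.
Qed.

Lemma Esum_Ecoef e s N : uniq s -> supported s N (Ecoef e) -> e = Esum s N (Ecoef e).
Proof.
move=> us sN; set s' := undup (Esupp e ++ s).
have us' : uniq s' by apply: undup_uniq.
rewrite {1}(EcoefE e) (@Esum_widen _ s' _ (maxn (Edeg e) N)) ?Esupp_uniq ?leq_maxl //.
- by rewrite [RHS](@Esum_widen _ s' _ (maxn (Edeg e) N)) ?leq_maxr // => a ha;
    rewrite mem_undup mem_cat ha orbT.
- by move=> a ha; rewrite mem_undup mem_cat ha.
- exact: Ecoef_supported.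
Qed.

Lemma common_support (es : seq E) : exists s N, [/\ uniq s, all Rep s &
  forall e, e \in es -> supported s N (Ecoef e)].
Proof.
exists (undup (flatten [seq Esupp e | e <- es])), (\max_(e <- es) Edeg e); split.
- exact: undup_uniq.
- apply/allP => a; rewrite mem_undup => /flatten_mapP[e _ ha].
  exact: (allP (Esupp_Rep e)).
- move=> e he a k /Ecoef_supported /andP[ha hk].
  rewrite mem_undup; apply/andP; split; first by apply/flatten_mapP; exists e.
  by apply: leq_trans hk _; apply: leq_bigmax_seq.
Qed.

Lemma Ecoef_Esum s N F : uniq s -> all Rep s -> supported s N F -> Ecoef (Esum s N F) =2 F.
Proof.
move=> us rs sF; set e := Esum s N F.
set s2 := undup (Esupp e ++ s); set N2 := maxn (Edeg e) N.
have us2 : uniq s2 by apply: undup_uniq.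
have rs2 : all Rep s2.
  apply/allP => a; rewrite mem_undup mem_cat => /orP[] h; last exact: (allP rs).
  exact: (allP (Esupp_Rep e)).
have h1 : e = Esum s2 N2 (Ecoef e).
  rewrite {1}(EcoefE e); apply: Esum_widen; rewrite ?Esupp_uniq ?leq_maxl //.
    by move=> a ha; rewrite mem_undup mem_cat ha.
  exact: Ecoef_supported.
have h2 : e = Esum s2 N2 F.
  apply: Esum_widen; rewrite ?leq_maxr // => a ha.
  by rewrite mem_undup mem_cat ha orbT.
have sD : supported s2 N2 (fun a k => Ecoef e a k - F a k).
  move=> a k hne; case: (eqVneq (Ecoef e a k) 0) => [hc|/Ecoef_supported/andP[ha hk]].
    move: hne; rewrite hc sub0r oppr_eq0 => /sF/andP[ha hk].
    by rewrite mem_undup mem_cat ha orbT /=; exact: leq_trans hk (leq_maxr _ _).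
  by rewrite mem_undup mem_cat ha /=; exact: leq_trans hk (leq_maxl _ _).
move=> a k; apply/eqP; rewrite -subr_eq0; apply/eqP; move: a k.
by apply: (Esum_eq0 us2 rs2 sD); rewrite EsumB -h1 -h2 subrr.
Qed.

Lemma Ecoef0 : Ecoef 0 =2 (fun _ _ => 0).
Proof.
have -> : (0 : E) = Esum [::] 0 (fun _ _ => 0) by rewrite /Esum big_nil.
by apply: Ecoef_Esum => // ? ?; rewrite eqxx.
Qed.

Lemma EcoefD e1 e2 a k : Ecoef (e1 + e2) a k = Ecoef e1 a k + Ecoef e2 a k.
Proof.
have [s [N [us rs hs]]] := common_support [:: e1; e2].
have s1 := hs e1 (mem_head _ _).
have s2 : supported s N (Ecoef e2) by apply: hs; rewrite !inE eqxx orbT.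
rewrite {1}(Esum_Ecoef us s1) {1}(Esum_Ecoef us s2) -EsumD Ecoef_Esum // => b m.
by case: (eqVneq (Ecoef e1 b m) 0) => [-> | /s1 //]; rewrite add0r => /s2.
Qed.

Lemma EcoefN e a k : Ecoef (- e) a k = - Ecoef e a k.
Proof. by apply/eqP; rewrite -subr_eq0 opprK -EcoefD addNr Ecoef0. Qed.

Lemma EcoefB e1 e2 a k : Ecoef (e1 - e2) a k = Ecoef e1 a k - Ecoef e2 a k.
Proof. by rewrite EcoefD EcoefN. Qed.

Lemma Ecoef_sum I (r : seq I) (P : pred I) (F : I -> E) a k :
  Ecoef (\sum_(i <- r | P i) F i) a k = \sum_(i <- r | P i) Ecoef (F i) a k.
Proof.
elim: r => [|x r IH]; first by rewrite !big_nil Ecoef0.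
by rewrite !big_cons; case: (P x); rewrite ?EcoefD IH.
Qed.

Lemma Ecoef_inj e1 e2 : Ecoef e1 =2 Ecoef e2 -> e1 = e2.
Proof.
move=> h; apply/eqP; rewrite -subr_eq0; apply/eqP.
rewrite (EcoefE (e1 - e2)) /Esum; apply: big1 => a _; apply: big1 => k _.
by rewrite EcoefB h subrr rmorph0 !mul0r.
Qed.

Lemma Ecoef_jmul r e a k : Ecoef (j r * e) a k = r * Ecoef e a k.
Proof.
have sN : supported (Esupp e) (Edeg e) (fun b m => r * Ecoef e b m).
  by move=> b m hne; apply: Ecoef_supported; apply: contraNneq hne => ->; rewrite mulr0.
rewrite {1}(EcoefE e) /Esum mulr_sumr.
under eq_bigr do rewrite mulr_sumr; under eq_bigr do under eq_bigr do
  rewrite !mulrA -rmorphM.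
by rewrite (Ecoef_Esum (Esupp_uniq e) (Esupp_Rep e) sN).
Qed.

Lemma Ecoef_mono r b m a k : Rep b ->
  Ecoef (j r * tp b * l ^+ m) a k = if (a == b) && (k == m) then r else 0.
Proof.
move=> hb; set F := fun a k => if (a == b) && (k == m) then r else 0.
have -> : j r * tp b * l ^+ m = Esum [:: b] m.+1 F.
  rewrite /Esum big_cons big_nil addr0 (bigD1 ord_max) //= /F !eqxx /= big1 ?addr0 //.
  move=> i hi; have -> : (i == m :> nat) = false.
    by apply/negbTE; apply: contra hi => /eqP h; apply/eqP/val_inj.
  by rewrite /= rmorph0 !mul0r.
rewrite Ecoef_Esum //=; first by rewrite hb.
move=> a' k'; rewrite /F; case: ifP; last by rewrite eqxx.
by case/andP => /eqP -> /eqP -> _; rewrite mem_head ltnSn.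
Qed.

Lemma Ecoef_j r a k : Rep 0 -> Ecoef (j r) a k = if (a == 0) && (k == 0%N) then r else 0.
Proof. by move=> r0; rewrite -Ecoef_mono // tp0 expr0 !mulr1. Qed.

Definition mxEcoef m n (X : 'M[E]_(m, n)) a k : 'M[R]_(m, n) := map_mx (fun e => Ecoef e a k) X.

Definition mxEsum m n s N (Y : K -> nat -> 'M[R]_(m, n)) : 'M[E]_(m, n) :=
  \matrix_(i, c) Esum s N (fun a k => Y a k i c).

Definition mxsupported m n (s : seq K) N (Y : K -> nat -> 'M[R]_(m, n)) :=
  forall a k, Y a k != 0 -> (a \in s) && (k < N)%N.

Lemma mxEcoefD m n (X Y : 'M[E]_(m, n)) a k : mxEcoef (X + Y) a k = mxEcoef X a k + mxEcoef Y a k.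
Proof. by apply/matrixP => i c; rewrite !mxE EcoefD. Qed.

Lemma mxEcoef0 m n a k : mxEcoef (0 : 'M[E]_(m, n)) a k = 0.
Proof. by apply/matrixP => i c; rewrite !mxE Ecoef0. Qed.

Lemma mxEcoef_jmul m n p (X : 'M[R]_(m, n)) (Y : 'M[E]_(n, p)) a k :
  mxEcoef (map_mx j X *m Y) a k = X *m mxEcoef Y a k.
Proof.
apply/matrixP => i c; rewrite !mxE Ecoef_sum; apply: eq_bigr => b _.
by rewrite !mxE Ecoef_jmul.
Qed.

Lemma mxEcoef_inj m n (X Y : 'M[E]_(m, n)) : (forall a k, mxEcoef X a k = mxEcoef Y a k) -> X = Y.
Proof.
move=> h; apply/matrixP => i c; apply: Ecoef_inj => a k.
by have /matrixP/(_ i c) := h a k; rewrite !mxE.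
Qed.

Lemma mxEcoef_mxEsum m n s N (Y : K -> nat -> 'M[R]_(m, n)) : uniq s -> all Rep s ->
  mxsupported s N Y -> forall a k, mxEcoef (mxEsum s N Y) a k = Y a k.
Proof.
move=> us rs sY a k; apply/matrixP => i c; rewrite !mxE Ecoef_Esum //.
by move=> b h hne; apply: sY; apply: contraNneq hne => ->; rewrite mxE.
Qed.

Lemma mxEcoef_support m n (X : 'M[E]_(m, n)) :
  exists s N, [/\ uniq s, all Rep s & mxsupported s N (mxEcoef X)].
Proof.
have [s [N [us rs hs]]] := common_support [seq X x.1 x.2 | x : 'I_m * 'I_n].
exists s, N; split => // a k hne.
have /existsP [[i c] /= hic] : [exists x : 'I_m * 'I_n, Ecoef (X x.1 x.2) a k != 0].
  apply: contraNT hne => /existsPn h; apply/eqP/matrixP => i c; rewrite !mxE.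
  by apply/eqP/negPn; exact: h (i, c).
by apply: (hs (X i c)) => //; apply/mapP; exists (i, c); rewrite ?mem_enum.
Qed.

Lemma Ecoef_notRep e a k : ~~ Rep a -> Ecoef e a k = 0.
Proof.
move=> ha; apply/eqP; apply: contraNT ha => /Ecoef_supported /andP[h _].
exact: (allP (Esupp_Rep e)).
Qed.

Lemma Ecoef_ge_deg e a k : (Edeg e <= k)%N -> Ecoef e a k = 0.
Proof. by move=> hk; apply: (supported0 (@Ecoef_supported e)); rewrite ltnNge hk andbF. Qed.

Definition jK : {rmorphism K -> E} := j \o in_alg R.

Lemma mxEcoef_mul_jK m n p (X : 'M[E]_(m, n)) (C : 'M[K]_(n, p)) a k :
  mxEcoef (X *m map_mx jK C) a k = mxEcoef X a k *m map_mx (in_alg R) C.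
Proof.
apply/matrixP => i c; rewrite !mxE Ecoef_sum; apply: eq_bigr => b _.
by rewrite !mxE mulrC Ecoef_jmul mulrC.
Qed.

Hypothesis hdR : derivation dR.
Hypothesis hdRK : forall c : K, dR c%:A = 0.

Lemma dE_jK c : dE (jK c) = 0.
Proof. by rewrite /= dE_j hdRK rmorph0. Qed.

Lemma dE_jKM c e : dE (jK c * e) = jK c * dE e.
Proof. by rewrite (derM derivation_dE) dE_jK mul0r add0r. Qed.

(* Coefficients of [dE e], from [dE (t^a l^k) = a t^a l^k + k t^a l^(k-1)]. *)
Definition der_coef (F : K -> nat -> R) a k := dR (F a k) + a%:A * F a k + k.+1%:R * F a k.+1.

Lemma dE_mono f a k : dE (j f * tp a * l ^+ k) =
  j (dR f + a%:A * f) * tp a * l ^+ k + j (k%:R * f) * tp a * l ^+ k.-1.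
Proof.
have hdE := derivation_dE.
rewrite !(derM hdE) dE_j dE_tp !rmorphD !rmorphM rmorph_nat.
case: k => [|k]; first by rewrite expr0 (der1 hdE) mul0r; ring.
by rewrite (derX hdE) dE_l; ring.
Qed.

Lemma dE_Esum s N F : supported s N F -> dE (Esum s N F) = Esum s N (der_coef F).
Proof.
move=> sF; rewrite /Esum (der_sum derivation_dE); apply: eq_bigr => a _.
rewrite (der_sum derivation_dE); under eq_bigr do rewrite dE_mono.
rewrite big_split /=; under [RHS]eq_bigr do rewrite rmorphD !mulrDl.
rewrite big_split /=; congr (_ + _).
case: N sF => [|N] sF; first by rewrite !big_ord0.
rewrite big_ord_recl big_ord_recr /= mul0r rmorph0 !mul0r add0r.
by rewrite (supported0 sF) ?ltnn ?andbF // mulr0 rmorph0 !mul0r addr0.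
Qed.

Lemma Ecoef_dE e a k : Ecoef (dE e) a k = der_coef (Ecoef e) a k.
Proof.
rewrite {1}(EcoefE e) (dE_Esum (@Ecoef_supported e)) Ecoef_Esum ?Esupp_uniq ?Esupp_Rep //.
move=> b m; rewrite /der_coef.
case: (eqVneq (Ecoef e b m) 0) => [->|/Ecoef_supported //].
rewrite (der0 hdR) mulr0 !add0r => h.
have /Ecoef_supported/andP[hb hm] : Ecoef e b m.+1 != 0.
  by apply: contraNneq h => ->; rewrite mulr0.
by rewrite hb ltnW.
Qed.

Lemma mxEcoef_dE m n (X : 'M[E]_(m, n)) a k :
  mxEcoef (map_mx dE X) a k =
  map_mx dR (mxEcoef X a k) + a%:A *: mxEcoef X a k + k.+1%:R *: mxEcoef X a k.+1.
Proof. by apply/matrixP => i c; rewrite !mxE Ecoef_dE. Qed.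

Hypothesis charK0 : [pchar K] =i pred0.
Hypothesis hRep : reps_KmodZ Rep.
Hypothesis no_log : without_logarithm dR.
Hypothesis no_exp : without_exponents Rep dR.

Lemma Rep0 : Rep 0. Proof. by case: hRep. Qed.

Lemma natrM_eq0 (n : nat) (x : R) : (0 < n)%N -> n%:R * x = 0 -> x = 0.
Proof.
move=> n0; rewrite mulr_natl -scaler_nat => /eqP; rewrite scaler_eq0.
by rewrite (pcharf0P _).1 // eqn0Ngt n0 => /eqP.
Qed.

Lemma Econst e : dE e = 0 -> exists c : K, e = jK c.
Proof.
set f := Ecoef e => de.
have f_rec a k : der_coef f a k = 0 by rewrite -Ecoef_dE de Ecoef0.
have f_high a : forall k, (Edeg e <= k)%N -> f a k = 0 by move=> k; apply: Ecoef_ge_deg.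
have fa0 a : a != 0 -> forall k, f a k = 0.
  move=> a0; case: (boolP (Rep a)) => ra; last by move=> k; apply: Ecoef_notRep.
  apply: (downward_ind (f_high a)) => k h; apply: (no_exp ra a0).
  by have := f_rec a k; rewrite /der_coef h mulr0 addr0 mulr_algl.
have f0S : forall k, f 0 k.+1 = 0.
  apply: (@downward_ind _ (Edeg e)) => [k hk|k h]; first exact/f_high/leqW.
  have d1 : dR (f 0 k.+1) = 0.
    by have := f_rec 0 k.+1; rewrite /der_coef h mulr0 addr0 scale0r mul0r addr0.
  have d0 : dR (f 0 k) = - (k.+1%:R * f 0 k.+1).
    by apply/eqP; rewrite -subr_eq0 opprK; have := f_rec 0 k; rewrite /der_coef scale0r mul0r addr0 => ->.
  have /no_log [c hc] : dR (dR (f 0 k)) = 0 by rewrite d0 (derN hdR) (der_natM hdR) d1 mulr0 oppr0.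
  by apply: (@natrM_eq0 k.+1) => //; apply/eqP; rewrite -oppr_eq0 -d0 hc hdRK.
have [c hc] : exists c : K, f 0 0%N = c%:A.
  apply/no_log; have := f_rec 0 0%N.
  by rewrite /der_coef f0S mulr0 addr0 scale0r mul0r addr0 => ->; rewrite (der0 hdR).
exists c; apply: Ecoef_inj => a k.
rewrite (_ : jK c = j c%:A) // Ecoef_j ?Rep0 //.
case: (eqVneq a 0) => [->|a0] /=; last exact: fa0.
by case: k => [|k]; [exact: hc | exact: f0S].
Qed.

Lemma Econst_mx m n (X : 'M[E]_(m, n)) : map_mx dE X = 0 -> exists C : 'M[K]_(m, n), X = map_mx jK C.
Proof.
move=> dX; have hX i c : exists x : K, X i c == jK x.
  have /matrixP/(_ i c) := dX; rewrite !mxE => /Econst [x ->].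
  by exists x.
exists (\matrix_(i, c) xchoose (hX i c)); apply/matrixP => i c.
by rewrite !mxE; apply/eqP; exact: (xchooseP (hX i c)).
Qed.

(* Taking traces of [P Q = 1] and [Q P = 1] gives [m = n] in characteristic 0. *)
Lemma unit_mx_square m n (P : 'M[E]_(n, m)) (Q : 'M[E]_(m, n)) :
  P *m Q = 1%:M -> Q *m P = 1%:M -> m = n.
Proof.
move=> PQ QP; have := mxtrace_mulC P Q; rewrite PQ QP !mxtrace1.
by rewrite -(rmorph_nat jK) -(rmorph_nat jK m) => /fmorph_inj /(pchar0_natr_inj charK0).
Qed.

(** * Regular singular systems are gauge equivalent to constant ones *)

Lemma trivial_freeP n (G : 'M[E]_n) : trivial_free dE G ->
  exists P Q : 'M[E]_n, [/\ P *m Q = 1%:M, Q *m P = 1%:M & horizontal dE 0 G P].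
Proof.
case=> m [P [Q [PQ QP hP]]]; have mn := unit_mx_square PQ QP; subst m.
by exists P, Q; split => //; apply/horizontal0E.
Qed.

Lemma horizontal_fundamental n p (G P Q : 'M[E]_n) (X : 'M[E]_(n, p)) :
  P *m Q = 1%:M -> Q *m P = 1%:M -> horizontal dE 0 G P -> horizontal dE 0 G X ->
  exists C : 'M[K]_(n, p), X = P *m map_mx jK C.
Proof.
move=> PQ QP hP hX.
have /horizontal0E := horizontal_mul derivation_dE (horizontal_inv derivation_dE PQ QP hP) hX.
rewrite mul0mx addr0 => /Econst_mx [C hC]; exists C.
by rewrite -hC mulmxA PQ mul1mx.
Qed.

Lemma regsing_gauge n (G1 G2 : 'M[R]_n) :
  gauge_equivalent dR G1 G2 -> regsing_mx j dE G1 -> regsing_mx j dE G2.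
Proof.
move=> /(gauge_equivalent_map dE_j) [U [V [UV VU hU]]] /trivial_freeP [P [Q [PQ QP hP]]].
exists n, (U *m P), (Q *m V); split.
- by rewrite -mulmxA (mulmxA P) PQ mul1mx.
- by rewrite -mulmxA (mulmxA V) VU mul1mx.
- exact/horizontal0E/(horizontal_mul derivation_dE hU hP).
Qed.

(* [coef_rec G (mxEcoef X)] is the coefficient of [t^a l^k] in [dE X + G X]. *)
Definition coef_rec n p (G : 'M[R]_n) (W : K -> nat -> 'M[R]_(n, p)) a k :=
  map_mx dR (W a k) + a%:A *: W a k + k.+1%:R *: W a k.+1 + G *m W a k.

Lemma horizontal_coefP n p (G : 'M[R]_n) (X : 'M[E]_(n, p)) :
  horizontal dE 0 (map_mx j G) X <-> forall a k, coef_rec G (mxEcoef X) a k = 0.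
Proof.
have hc a k : mxEcoef (map_mx dE X + map_mx j G *m X) a k = coef_rec G (mxEcoef X) a k.
  by rewrite mxEcoefD mxEcoef_dE mxEcoef_jmul.
rewrite horizontal0E; split => [h a k | h]; first by rewrite -hc h mxEcoef0.
by apply: mxEcoef_inj => a k; rewrite hc h mxEcoef0.
Qed.

Lemma coef_rec_scale n p (G : 'M[R]_n) (W : K -> nat -> 'M[R]_(n, p)) (f : K -> K) a k :
  coef_rec G (fun b m => (f b)%:A *: W b m) a k = (f a)%:A *: coef_rec G W a k.
Proof.
rewrite /coef_rec !scalerDr -scalemxAr !scalerA (mulrC a%:A) (mulrC k.+1%:R); congr (_ + _ + _ + _).
by apply/matrixP => i c; rewrite !mxE (derM hdR) hdRK mul0r add0r.
Qed.

Lemma coef_rec_shift n p (G : 'M[R]_n) (W : K -> nat -> 'M[R]_(n, p)) a k :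
  coef_rec G (fun b m => m.+1%:R *: W b m.+1) a k = k.+1%:R *: coef_rec G W a k.+1.
Proof.
rewrite /coef_rec !scalerDr -scalemxAr !scalerA (mulrC a%:A); congr (_ + _ + _ + _).
by apply/matrixP => i c; rewrite !mxE (der_natM hdR).
Qed.

Lemma horizontal_coef_const n (G : 'M[R]_n) (P Q : 'M[E]_n) s N (Y : K -> nat -> 'M[R]_n) :
  P *m Q = 1%:M -> Q *m P = 1%:M -> horizontal dE 0 (map_mx j G) P ->
  uniq s -> all Rep s -> mxsupported s N Y -> (forall a k, coef_rec G Y a k = 0) ->
  exists C : 'M[K]_n, forall a k, Y a k = mxEcoef P a k *m map_mx (in_alg R) C.
Proof.
move=> PQ QP hP us rs sY hY; have cY := mxEcoef_mxEsum us rs sY.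
have /(horizontal_fundamental PQ QP hP) [C hC] : horizontal dE 0 (map_mx j G) (mxEsum s N Y).
  by apply/horizontal_coefP => a k; rewrite -(hY a k) /coef_rec !cY.
by exists C => a k; rewrite -cY hC mxEcoef_mul_jK.
Qed.

Lemma j_rinv r e : j r * e = 1 -> r * Ecoef e 0 0%N = 1.
Proof. by move=> h; rewrite -Ecoef_jmul h -(rmorph1 j) Ecoef_j ?Rep0 // !eqxx. Qed.

(* The operators [W a k |-> a W a k] and [W a k |-> (k + 1) W a (k + 1)] commute with
   [coef_rec G], so they send [P] to horizontal matrices, i.e. to [P T] and [P D]. *)
Lemma fundamental_coef_eigen n (G : 'M[R]_n) (P Q : 'M[E]_n) :
  P *m Q = 1%:M -> Q *m P = 1%:M -> horizontal dE 0 (map_mx j G) P ->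
  exists T D : 'M[K]_n,
    (forall a k, a%:A *: mxEcoef P a k = mxEcoef P a k *m map_mx (in_alg R) T) /\
    (forall a k, k.+1%:R *: mxEcoef P a k.+1 = mxEcoef P a k *m map_mx (in_alg R) D).
Proof.
move=> PQ QP hP; have [s [N [us rs sW]]] := mxEcoef_support P.
have Wrec := (horizontal_coefP _ _).1 hP.
set W := mxEcoef P in sW Wrec *.
have [T hT] : exists T : 'M[K]_n, forall a k, a%:A *: W a k = W a k *m map_mx (in_alg R) T.
  apply: (horizontal_coef_const (N := N) (Y := fun a k => a%:A *: W a k) PQ QP hP us rs).
    by move=> a k h; apply: sW; apply: contraNneq h => ->; rewrite scaler0.
  by move=> a k; rewrite (coef_rec_scale _ _ id) Wrec scaler0.
have [D hD] : exists D : 'M[K]_n, forall a k, k.+1%:R *: W a k.+1 = W a k *m map_mx (in_alg R) D.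
  apply: (horizontal_coef_const (N := N) (Y := fun a k => k.+1%:R *: W a k.+1) PQ QP hP us rs).
    move=> a k h; have /sW /andP[sa hk] : W a k.+1 != 0.
      by apply: contraNneq h => ->; rewrite scaler0.
    by rewrite sa; exact: ltnW.
  by move=> a k; rewrite coef_rec_shift Wrec scaler0.
by exists T, D.
Qed.

(* [P = U Y] makes [U] invertible, and summing [coef_rec] at [k = 0] over [a] is the gauge
   equation of [U]. *)
Theorem regsing_gauge_const n (G : 'M[R]_n) : regsing_mx j dE G ->
  exists C : 'M[K]_n, gauge_equivalent dR (map_mx (in_alg R) C) G.
Proof.
case/trivial_freeP => P [Q [PQ QP hP]].
have [T [D [hT hD]]] := fundamental_coef_eigen PQ QP hP.
have [s [N [us rs sW]]] := mxEcoef_support P.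
have Wrec := (horizontal_coefP _ _).1 hP.
set W := mxEcoef P in sW Wrec hT hD *; set U := \sum_(c <- s) W c 0%N.
have /choice [M hM] : forall ak : K * nat, exists M, ak.1 \in s -> W ak.1 ak.2 = U *m M.
  move=> [a k]; case: (boolP (a \in s)) => sa; last by exists 0.
  by have [M ->] := lagrange_taylor_factor charK0 us hT hD k sa; exists M.
set Y := fun a k => if (a \in s) && (k < N)%N then M (a, k) else 0.
have PU : P = map_mx j U *m mxEsum s N Y.
  apply: mxEcoef_inj => a k; rewrite mxEcoef_jmul mxEcoef_mxEsum //; last first.
    by move=> b m; rewrite /Y; case: ifP => //; rewrite eqxx.
  rewrite /Y; case: ifP => [/andP[sa _]|h]; first exact: (hM (a, k)).
  by rewrite mulmx0; apply/eqP; apply: contraFT h; exact: sW.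
set x := Ecoef (\det (mxEsum s N Y *m Q)) 0 0%N.
have Ux : \det U * x = 1 by apply: j_rinv; rewrite -det_map_mx -det_mulmx mulmxA -PU PQ det1.
exists (- (T + D)), U, (x *: \adj U); split.
- by rewrite -scalemxAr mul_mx_adj scale_scalar_mx mulrC Ux.
- by rewrite -scalemxAl mul_adj_mx scale_scalar_mx mulrC Ux.
rewrite /horizontal (der_summx hdR) mulmx_sumr mulmx_suml -big_split /=.
apply: eq_bigr => c _; have := Wrec c 0%N; rewrite /coef_rec hT hD.
rewrite map_mxN map_mxD mulmxN mulmxDr => h.
by apply/eqP; rewrite -addr_eq0 addrAC addrA h.
Qed.

(** * Solutions of constant systems *)

Definition Emono (x : K * K * nat) : E := jK x.1.1 * tp x.1.2 * l ^+ x.2.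

Definition elementary (e : E) := exists s : seq (K * K * nat), e = \sum_(x <- s) Emono x.

Lemma elementary0 : elementary 0. Proof. by exists [::]; rewrite big_nil. Qed.

Lemma elementaryD e1 e2 : elementary e1 -> elementary e2 -> elementary (e1 + e2).
Proof. by move=> [s1 ->] [s2 ->]; exists (s1 ++ s2); rewrite big_cat. Qed.

Lemma elementary_sum I (r : seq I) (F : I -> E) :
  (forall i, elementary (F i)) -> elementary (\sum_(i <- r) F i).
Proof.
move=> h; elim: r => [|x r IH]; first by rewrite big_nil; exact: elementary0.
by rewrite big_cons; apply: elementaryD.
Qed.

Lemma elementary_jKM c e : elementary e -> elementary (jK c * e).
Proof.
move=> [s ->]; exists [seq (c * x.1.1, x.1.2, x.2) | x <- s].
rewrite big_map mulr_sumr; apply: eq_bigr => x _.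
by rewrite /Emono rmorphM !mulrA.
Qed.

Lemma elementaryN e : elementary e -> elementary (- e).
Proof. by move=> h; rewrite -mulN1r -(rmorphN1 jK); apply: elementary_jKM. Qed.

Lemma elementaryB e1 e2 : elementary e1 -> elementary e2 -> elementary (e1 - e2).
Proof. by move=> h1 h2; apply: elementaryD => //; apply: elementaryN. Qed.

Lemma elementaryM e1 e2 : elementary e1 -> elementary e2 -> elementary (e1 * e2).
Proof.
move=> [s1 ->] [s2 ->]; rewrite mulr_suml; apply: elementary_sum => x.
rewrite mulr_sumr; apply: elementary_sum => y.
exists [:: (x.1.1 * y.1.1, x.1.2 + y.1.2, (x.2 + y.2)%N)].
by rewrite big_seq1 /Emono rmorphM tpD exprD; ring.
Qed.

Lemma elementary_tpl b k : elementary (tp b * l ^+ k).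
Proof. by exists [:: (1, b, k)]; rewrite big_seq1 /Emono rmorph1 mul1r. Qed.

Lemma elementary_tp b : elementary (tp b).
Proof. by rewrite -[tp b]mulr1 -(expr0 l); apply: elementary_tpl. Qed.

Lemma elementary_jK c : elementary (jK c).
Proof. by rewrite -[jK c]mulr1 -tp0 -[tp 0]mulr1 -(expr0 l); apply/elementary_jKM/elementary_tpl. Qed.

Lemma dE_tpl b k : dE (tp b * l ^+ k) = jK b * (tp b * l ^+ k) + k%:R * (tp b * l ^+ k.-1).
Proof.
have hdE := derivation_dE.
rewrite (derM hdE) dE_tp; case: k => [|k]; first by rewrite expr0 (der1 hdE) mulr0 mul0r !addr0 mulrA.
by rewrite (derX hdE) dE_l /=; ring.
Qed.

Lemma solve_tpl lam b k : exists x, elementary x /\ dE x + jK lam * x = tp b * l ^+ k.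
Proof.
have hdE := derivation_dE.
case: (eqVneq (b + lam) 0) => hb.
  have hl : jK lam = - jK b.
    by rewrite -rmorphN (_ : lam = - b) //; apply/eqP; rewrite -addr_eq0 addrC hb.
  have hinv : jK (k.+1%:R)^-1 * k.+1%:R = 1.
    by rewrite -(rmorph_nat jK) -rmorphM mulVf ?rmorph1 // (pcharf0P _).1.
  exists (jK (k.+1%:R)^-1 * (tp b * l ^+ k.+1)); split; first exact/elementary_jKM/elementary_tpl.
  rewrite dE_jKM dE_tpl succnK hl.
  transitivity (jK (k.+1%:R)^-1 * k.+1%:R * (tp b * l ^+ k)); first by ring.
  by rewrite hinv mul1r.
have hinv : jK (b + lam)^-1 * (jK b + jK lam) = 1 by rewrite -rmorphD -rmorphM mulVf ?rmorph1.
elim: k => [|k [x [ex hx]]].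
  exists (jK (b + lam)^-1 * (tp b * l ^+ 0)); split; first exact/elementary_jKM/elementary_tpl.
  rewrite dE_jKM dE_tpl mul0r addr0.
  transitivity (jK (b + lam)^-1 * (jK b + jK lam) * (tp b * l ^+ 0)); first by ring.
  by rewrite hinv mul1r.
exists (jK (b + lam)^-1 * (tp b * l ^+ k.+1 - k.+1%:R * x)); split.
  apply/elementary_jKM/elementaryB; first exact: elementary_tpl.
  by rewrite -(rmorph_nat jK); apply: elementary_jKM.
have dx : dE x = tp b * l ^+ k - jK lam * x by rewrite -hx addrK.
rewrite dE_jKM (derB hdE) dE_tpl succnK (der_natM hdE) dx.
transitivity (jK (b + lam)^-1 * (jK b + jK lam) * (tp b * l ^+ k.+1)); first by ring.
by rewrite hinv mul1r.
Qed.

Lemma solve_elementary lam g : elementary g -> exists x, elementary x /\ dE x + jK lam * x = g.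
Proof.
move=> [s ->]; elim: s => [|y s [x [ex hx]]].
  by exists 0; split; [exact: elementary0 | rewrite big_nil mulr0 addr0 (der0 derivation_dE)].
have [z [ez hz]] := solve_tpl lam y.1.2 y.2.
exists (jK y.1.1 * z + x); split; first by apply: elementaryD => //; apply: elementary_jKM.
by rewrite big_cons -hx /Emono -mulrA -hz (derD derivation_dE) dE_jKM; ring.
Qed.

Lemma tp_nat (k : nat) : tp k%:R = j (tR ^+ k).
Proof.
elim: k => [|k IH]; first by rewrite tp0 expr0 rmorph1.
by rewrite -addn1 natrD tpD IH tp1 exprD expr1 rmorphM.
Qed.

Lemma tp_int tRi (z : int) : tR * tRi = 1 -> tp z%:~R = j (tpow tR tRi z).
Proof.
move=> htR; case: z => k /=; first by rewrite -pmulrn tp_nat.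
rewrite NegzE mulrNz -pmulrn -[LHS]mulr1.
have <- : tp k.+1%:R * j (tRi ^+ k.+1) = 1 by rewrite tp_nat -rmorphM -exprMn htR expr1n rmorph1.
by rewrite mulrA -tpD addNr tp0 mul1r.
Qed.

(* The constant term of an elementary element is a Laurent polynomial in [tR]:
   [t^b] contributes to it only when [b] is an integer. *)
Lemma Ecoef00_elementary tRi e : tR * tRi = 1 -> elementary e ->
  exists s : seq (K * int), Ecoef e 0 0%N = \sum_(x <- s) x.1%:A * tpow tR tRi x.2.
Proof.
move=> htR [s ->]; rewrite Ecoef_sum; elim: s => [|x s [s' IH]]; first by exists [::]; rewrite !big_nil.
have [_ [/(_ x.1.2) [r [z [hr hx]]] _]] := hRep.
rewrite big_cons; have -> : Emono x = j (x.1.1%:A * tpow tR tRi z) * tp r * l ^+ x.2.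
  by rewrite /Emono hx tpD (tp_int _ htR) rmorphM; ring.
exists ((if (r == 0) && (x.2 == 0%N) then [:: (x.1.1, z)] else [::]) ++ s').
rewrite big_cat IH Ecoef_mono // [0 == r]eq_sym [0%N == _]eq_sym.
by case: ifP => _; rewrite ?big_seq1 ?big_nil /= ?add0r.
Qed.

Definition elementary_mx m n (M : 'M[E]_(m, n)) := forall i k, elementary (M i k).

Lemma elementary_mx_mul m n p (M : 'M[E]_(m, n)) (N : 'M[E]_(n, p)) :
  elementary_mx M -> elementary_mx N -> elementary_mx (M *m N).
Proof. by move=> hM hN i k; rewrite mxE; apply: elementary_sum => c; apply: elementaryM. Qed.

Lemma elementary_mx0 m n : elementary_mx (0 : 'M[E]_(m, n)).
Proof. by move=> i k; rewrite mxE; exact: elementary0. Qed.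

Lemma elementary_mxN m n (M : 'M[E]_(m, n)) : elementary_mx M -> elementary_mx (- M).
Proof. by move=> hM i k; rewrite mxE; apply: elementaryN. Qed.

Lemma elementary_mx_jK m n (C : 'M[K]_(m, n)) : elementary_mx (map_mx jK C).
Proof. by move=> i k; rewrite mxE; apply: elementary_jK. Qed.

Lemma elementary_mx_scalar m e : elementary e -> elementary_mx (e%:M : 'M_m).
Proof. by move=> he i k; rewrite mxE; case: (i == k) => //; exact: elementary0. Qed.

Lemma elementary_mx_block m1 m2 n1 n2 (A : 'M[E]_(m1, n1)) (B : 'M[E]_(m1, n2))
    (C : 'M[E]_(m2, n1)) (D : 'M[E]_(m2, n2)) :
  elementary_mx A -> elementary_mx B -> elementary_mx C -> elementary_mx D ->
  elementary_mx (block_mx A B C D).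
Proof.
move=> hA hB hC hD i k; rewrite -(splitK i) -(splitK k).
by case: (split i) => i'; case: (split k) => k'; rewrite ?block_mxEul ?block_mxEur ?block_mxEdl ?block_mxEdr.
Qed.
End EModel.

Lemma eigen_block_triangular (K : closedFieldType) n (C : 'M[K]_(1 + n)) :
  exists (S : 'M[K]_(1 + n)) (lam : K) (r : 'rV[K]_n) (C' : 'M[K]_n),
    S \in unitmx /\ invmx S *m C *m S = block_mx lam%:M r 0 C'.
Proof.
have [lam] : exists lam, root (char_poly C^T) lam by apply/closed_rootP; rewrite size_char_poly.
rewrite -eigenvalue_root_char => /eigenvalueP [v hv v0].
set u := v^T.
have hu : C *m u = lam *: u by rewrite /u -[C in LHS]trmxK -trmx_mul hv linearZ.
have ru : \rank u = 1%N by rewrite /u mxrank_tr rank_rV v0.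
set S := col_ebase u; have hS : S \in unitmx by apply: col_ebase_unit.
set Ru := row_ebase u; have eb := mulmx_ebase u; rewrite ru in eb.
have Spid : S *m pid_mx 1 = u *m invmx Ru by rewrite -eb mulmxK ?row_ebase_unit.
set T := invmx S *m C *m S.
have : T *m pid_mx 1 = lam *: (pid_mx 1 : 'M_(1 + n, 1)).
  by rewrite /T -!mulmxA Spid (mulmxA C) hu -scalemxAl -scalemxAr -Spid mulKmx.
rewrite (@pid_mx_col K n 1) -[T](@submxK _ 1 n 1 n) mul_block_col !mulmx1 !mulmx0 !addr0.
rewrite scale_col_mx scaler0 => /eq_col_mx [hul hdl].
exists S, lam, (ursubmx T), (drsubmx T); split => //.
by rewrite -/T -{1}[T](@submxK _ 1 n 1 n) hul hdl scalemx1.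
Qed.

Section BasisChange.
Variables (R : comNzRingType) (M : lmodType R).

Lemma sum_scale_exchange n (c : 'I_n -> R) (F : 'I_n -> 'I_n -> R) (b : 'I_n -> M) :
  \sum_i c i *: \sum_k F k i *: b k = \sum_k (\sum_i F k i * c i) *: b k.
Proof.
under eq_bigr do rewrite scaler_sumr.
rewrite exchange_big; apply: eq_bigr => k _; rewrite scaler_suml; apply: eq_bigr => i _.
by rewrite scalerA mulrC.
Qed.

Lemma is_basis_change n (b : 'I_n -> M) (U V : 'M[R]_n) : is_basis b ->
  U *m V = 1%:M -> V *m U = 1%:M -> is_basis (fun i => \sum_k U k i *: b k).
Proof.
move=> [hi hs] UV VU; split.
  move=> c; rewrite sum_scale_exchange => /hi h.
  have Uc : U *m \col_i c i = 0.
    apply/matrixP => k z; rewrite !mxE -[RHS](h k).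
    by apply: eq_bigr => i _; rewrite !mxE.
  have /matrixP c0 : \col_i c i = 0 by rewrite -[LHS]mul1mx -VU -mulmxA Uc mulmx0.
  by move=> i; have := c0 i 0; rewrite !mxE.
move=> m; have [c ->] := hs m.
exists (fun i => (V *m \col_k c k) i 0); rewrite sum_scale_exchange; apply: eq_bigr => k _.
congr (_ *: _); have /matrixP/(_ k 0) := mulmxA U V (\col_k c k).
by rewrite UV mul1mx !mxE => ->.
Qed.

Variables (dR : R -> R) (nabla : M -> M).
Hypothesis hn : is_diffmod dR nabla.

Lemma nabla_sum n (F : 'I_n -> M) : nabla (\sum_i F i) = \sum_i nabla (F i).
Proof.
have nabla0 : nabla 0 = 0 by apply: (addIr (nabla 0)); rewrite -hn.1 !add0r.
by elim/big_ind2: _ => // x1 x2 y1 y2 <- <-; rewrite hn.1.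
Qed.

Lemma conn_matrix_change n (b : 'I_n -> M) (G U C : 'M[R]_n) : conn_matrix nabla b G ->
  horizontal dR C G U -> conn_matrix nabla (fun i => \sum_k U k i *: b k) C.
Proof.
move=> hG hU i; rewrite nabla_sum sum_scale_exchange.
under eq_bigr do rewrite hn.2 hG.
rewrite big_split /= sum_scale_exchange -big_split /=; apply: eq_bigr => k _.
rewrite -scalerDl; congr (_ *: _); have /matrixP/(_ k i) := hU; rewrite !mxE => <-.
by congr (_ + _); apply: eq_bigr => p _; rewrite mulrC.
Qed.
End BasisChange.

Section ConstantSystems.
Variables (K : closedFieldType) (Rep : pred K) (R : comAlgType K) (tR : R) (dR : R -> R)
  (E : comNzRingType) (j : {rmorphism R -> E}) (tp : K -> E) (l : E) (dE : E -> E).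
Hypothesis hE : E_model Rep tR dR j tp l dE.
Hypothesis hdRK : forall c : K, dR c%:A = 0.
Hypothesis charK0 : [pchar K] =i pred0.

Local Notation jK := (jK j).
Local Notation elementary_mx := (elementary_mx j tp l).

Local Notation elementary := (elementary j tp l).

Definition elementary_trivializable n (C : 'M[K]_n) := exists P Q : 'M[E]_n,
  [/\ P *m Q = 1%:M, Q *m P = 1%:M, horizontal dE 0 (map_mx jK C) P,
      elementary_mx P & elementary_mx Q].

Lemma horizontal_const_gauge n (S C : 'M[K]_n) :
  S \in unitmx -> horizontal dE (map_mx jK (invmx S *m C *m S)) (map_mx jK C) (map_mx jK S).
Proof.
move=> hS; rewrite /horizontal -!map_mxM !mulmxA mulmxV // mul1mx.
rewrite (_ : map_mx dE _ = 0) ?add0r //.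
by apply/matrixP => i k; rewrite !mxE (dE_jK hE hdRK).
Qed.

Lemma elementary_trivializable_conj n (S C : 'M[K]_n) : S \in unitmx ->
  elementary_trivializable (invmx S *m C *m S) -> elementary_trivializable C.
Proof.
move=> hS [P [Q [PQ QP hP eP eQ]]].
have SS : map_mx jK S *m map_mx jK (invmx S) = 1%:M by rewrite -map_mxM mulmxV // map_mx1.
have SS' : map_mx jK (invmx S) *m map_mx jK S = 1%:M by rewrite -map_mxM mulVmx // map_mx1.
exists (map_mx jK S *m P), (Q *m map_mx jK (invmx S)); split.
- by rewrite -mulmxA (mulmxA P) PQ mul1mx.
- by rewrite -mulmxA (mulmxA _ (map_mx jK S)) SS' mul1mx.
- exact: (horizontal_mul (derivation_dE hE) (horizontal_const_gauge C hS) hP).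
- by apply: (elementary_mx_mul hE) => //; apply: (elementary_mx_jK hE).
- by apply: (elementary_mx_mul hE) => //; apply: (elementary_mx_jK hE).
Qed.

(* With [P'] a fundamental matrix of [C'], a fundamental matrix of the block system has
   diagonal blocks [t^(-lam)] and [P'], its corner [x] solving [dE x + lam x = - r P']. *)
Lemma elementary_trivializable_block n (lam : K) (r : 'rV[K]_n) (C' : 'M[K]_n) :
  elementary_trivializable C' -> elementary_trivializable (block_mx lam%:M r 0 C').
Proof.
move=> [P' [Q' [PQ' QP' /horizontal0E hP' eP' eQ']]].
have hdE := derivation_dE hE.
have hx c : exists y, elementary y /\ dE y + jK lam * y = - (map_mx jK r *m P') 0 c.
  apply: (solve_elementary hE hdRK charK0); apply: elementaryN.
  by apply: (elementary_mx_mul hE) => //; apply: (elementary_mx_jK hE).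
have [f hf] := fin_all_exists hx; set x : 'M[E]_(1, n) := \row_c f c.
have ex : elementary_mx x by move=> i c; rewrite mxE; case: (hf c).
have hxx : map_mx dE x + (jK lam)%:M *m x + map_mx jK r *m P' = 0.
  rewrite mul_scalar_mx; apply/matrixP => i c; rewrite ord1 !mxE.
  by have [_ ->] := hf c; rewrite !mxE addNr.
set P := block_mx (tp (- lam))%:M x 0 P'.
set Q := block_mx (tp lam)%:M (- ((tp lam)%:M *m x *m Q')) 0 Q'.
have tpN : tp (- lam) * tp lam = 1 by rewrite -(tpD hE) addNr (tp0 hE).
have PQ : P *m Q = 1%:M.
  rewrite /P /Q mulmx_block !mul0mx !mulmx0 !addr0 !add0r PQ' -scalar_mxM tpN.
  rewrite mulmxN !mulmxA -scalar_mxM tpN mul1mx addNr.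
  by rewrite [RHS](@scalar_mx_block _ 1 n).
exists P, Q; split => //.
- exact: mulmx1C.
- apply/horizontal0E; rewrite /P map_block_mx map_block_mx mulmx_block add_block_mx.
  rewrite (der_scalar_mx hdE) (der_mx0 hdE) map_scalar_mx map_mx0 !mul0mx !mulmx0 !addr0 !add0r.
  rewrite addrA hxx hP' mul_scalar_mx scale_scalar_mx -raddfD /= (dE_tp hE) -mulrDl.
  by rewrite -[j _]/(jK (- lam)) -rmorphD addNr rmorph0 mul0r raddf0 block_mx0.
- apply: elementary_mx_block => //; last exact: elementary_mx0.
  exact: elementary_mx_scalar (elementary_tp j tp l (- lam)).
- apply: elementary_mx_block; last exact: eQ'; last exact: elementary_mx0.
    exact: elementary_mx_scalar (elementary_tp j tp l lam).
  apply: elementary_mxN; apply: (elementary_mx_mul hE) => //.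
  by apply: (elementary_mx_mul hE) => //; apply: elementary_mx_scalar (elementary_tp j tp l lam).
Qed.

Theorem const_elementary_trivializable n (C : 'M[K]_n) : elementary_trivializable C.
Proof.
elim: n C => [|n IH] C.
  by exists 1%:M, 1%:M; split; try apply/matrixP; case.
have [S [lam [r [C' [hS hT]]]]] := eigen_block_triangular C.
apply: (elementary_trivializable_conj hS); rewrite hT.
exact: elementary_trivializable_block.
Qed.

Lemma regsing_const n (C : 'M[K]_n) : regsing_mx j dE (map_mx (in_alg R) C).
Proof.
have [P [Q [PQ QP /horizontal0E hP _ _]]] := const_elementary_trivializable C.
by exists n, P, Q; rewrite -map_mx_comp.
Qed.

Hypothesis hdR : derivation dR.
Hypothesis hRep : reps_KmodZ Rep.
Hypothesis no_log : without_logarithm dR.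
Hypothesis no_exp : without_exponents Rep dR.

Theorem regular_singularP (M : lmodType R) (nabla : M -> M) : is_diffmod dR nabla ->
  regular_singular j dE nabla <->
  exists n (b : 'I_n -> M) (G : 'M[R]_n),
    [/\ is_basis b, conn_matrix nabla b G & forall i k, exists c : K, G i k = c%:A].
Proof.
move=> hn; split=> [[n [b [G [hb hG /(regsing_gauge_const hE hdR hdRK charK0 hRep no_log no_exp)]]]] | ].
  move=> [C [U [V [UV VU hU]]]]; exists n, (fun i => \sum_k U k i *: b k), (map_mx (in_alg R) C).
  split; first exact: is_basis_change hb UV VU.
    exact: (conn_matrix_change hn hG hU).
  by move=> i k; exists (C i k); rewrite mxE.
move=> [n [b [G [hb hG hc]]]]; exists n, b, G; split => //.
have hc' i k : exists c : K, G i k == c%:A by have [c ->] := hc i k; exists c.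
have -> : G = map_mx (in_alg R) (\matrix_(i, k) xchoose (hc' i k)).
  by apply/matrixP => i k; rewrite !mxE; apply/eqP; exact: (xchooseP (hc' i k)).
exact: regsing_const.
Qed.

(* [F] is conjugate, through elementary fundamental matrices, to a constant matrix, hence
   elementary itself; its entries are their own constant terms. *)
Lemma horizontal_const_laurent (tRi : R) n1 n2 (C1 : 'M[K]_n1) (C2 : 'M[K]_n2) (F : 'M[R]_(n2, n1)) :
  tR * tRi = 1 -> horizontal dR (map_mx (in_alg R) C1) (map_mx (in_alg R) C2) F ->
  forall i k, exists s : seq (K * int), F i k = \sum_(x <- s) x.1%:A * tpow tR tRi x.2.
Proof.
move=> htR hF; have hdE := derivation_dE hE.
have [P1 [Q1 [PQ1 QP1 hP1 eP1 eQ1]]] := const_elementary_trivializable C1.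
have [P2 [Q2 [PQ2 QP2 hP2 eP2 eQ2]]] := const_elementary_trivializable C2.
have := horizontal_map (dE_j hE) hF; rewrite -!map_mx_comp => hjF.
have /horizontal0E := horizontal_mul hdE (horizontal_mul hdE (horizontal_inv hdE PQ2 QP2 hP2) hjF) hP1.
rewrite mul0mx addr0 => /(Econst_mx hE hdR hdRK charK0 hRep no_log no_exp) [Z hZ].
have jFE : map_mx j F = P2 *m map_mx jK Z *m Q1.
  by rewrite -hZ !mulmxA PQ2 mul1mx -mulmxA PQ1 mulmx1.
have eF : elementary_mx (map_mx j F).
  by rewrite jFE; do 2?apply: (elementary_mx_mul hE) => //; apply: (elementary_mx_jK hE).
move=> i k; have := eF i k; rewrite mxE => /(Ecoef00_elementary hE hRep htR) [s hs].
by exists s; rewrite -hs (Ecoef_j hE) ?(Rep0 hRep) // !eqxx.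
Qed.
End ConstantSystems.

Lemma map_mx_injective (R S : Type) (f : R -> S) m n :
  injective f -> injective (map_mx f : 'M[R]_(m, n) -> 'M[S]_(m, n)).
Proof. by move=> hf X Y /matrixP hXY; apply/matrixP => i k; apply: hf; have := hXY i k; rewrite !mxE. Qed.

(** * Scalar extension from [K[t,t^-1]] to [A] *)

Section ScalarExtension.
Variables (K : closedFieldType) (Rep : pred K) (L : comAlgType K) (tL tLinv : L) (dL : L -> L)
  (A : comAlgType K) (iota : {rmorphism L -> A}) (dA : A -> A).
Hypothesis hL : laurent_ring tL tLinv.
Hypothesis hdL : is_t_ddt tL dL.
Hypothesis iota_lin : forall (k : K) (x : L), iota (k *: x) = k *: iota x.
Hypothesis iota_inj : injective iota.
Hypothesis hdA_ext : forall x : L, dA (iota x) = iota (dL x).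

Lemma derivation_dL : derivation dL. Proof. by case: hdL. Qed.

Lemma dL_scalar (c : K) : dL c%:A = 0.
Proof. by case: hdL => _ [-> _]; rewrite (der1 derivation_dL) scaler0. Qed.

Lemma iota_scalar (c : K) : iota c%:A = c%:A.
Proof. by rewrite iota_lin rmorph1. Qed.

Lemma dA_scalar (c : K) : dA c%:A = 0.
Proof. by rewrite -iota_scalar hdA_ext dL_scalar rmorph0. Qed.

Lemma map_iota_scalar m n (C : 'M[K]_(m, n)) :
  map_mx iota (map_mx (in_alg L) C) = map_mx (in_alg A) C.
Proof. by apply/matrixP => i k; rewrite !mxE iota_scalar. Qed.

Lemma horizontal_iotaE n1 n2 (H1 : 'M[L]_n1) (H2 : 'M[L]_n2) F :
  horizontal dA (map_mx iota H1) (map_mx iota H2) (map_mx iota F) -> horizontal dL H1 H2 F.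
Proof.
move=> hF; apply: (map_mx_injective iota_inj); rewrite map_mxD !map_mxM -hF; congr (_ + _).
by apply/matrixP => i k; rewrite !mxE hdA_ext.
Qed.

Lemma without_logarithm_sub : without_logarithm dA -> without_logarithm dL.
Proof.
move=> no_log f; split => [h | [c ->]]; last by rewrite dL_scalar (der0 derivation_dL).
have /no_log [c hc] : dA (dA (iota f)) = 0 by rewrite !hdA_ext h rmorph0.
by exists c; apply: iota_inj; rewrite hc iota_scalar.
Qed.

Lemma without_exponents_sub : without_exponents Rep dA -> without_exponents Rep dL.
Proof.
move=> no_exp a f ha a0 h; apply: iota_inj; rewrite rmorph0; apply: (no_exp a (iota f) ha a0).
by rewrite hdA_ext -iota_lin -rmorphD h rmorph0.
Qed.

Lemma iota_tpow (z : int) : iota (tpow tL tLinv z) = tpow (iota tL) (iota tLinv) z.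
Proof. by case: z => k; rewrite /= rmorphXn. Qed.

Lemma iota_tL_unit : iota tL * iota tLinv = 1.
Proof. by case: hL => htL _; rewrite -rmorphM htL rmorph1. Qed.

Lemma laurent_mx_descent m n (F : 'M[A]_(m, n)) :
  (forall i k, exists s : seq (K * int), F i k = \sum_(x <- s) x.1%:A * tpow (iota tL) (iota tLinv) x.2) ->
  exists F0 : 'M[L]_(m, n), F = map_mx iota F0.
Proof.
move=> hF; have hF' i k : exists x : L, iota x == F i k.
  have [s ->] := hF i k; exists (\sum_(x <- s) x.1%:A * tpow tL tLinv x.2).
  by rewrite rmorph_sum; apply/eqP/eq_bigr => x _; rewrite rmorphM iota_scalar iota_tpow.
exists (\matrix_(i, k) xchoose (hF' i k)); apply/matrixP => i k.
by rewrite !mxE; apply/esym/eqP; exact: (xchooseP (hF' i k)).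
Qed.

Hypothesis charK0 : [pchar K] =i pred0.
Hypothesis hRep : reps_KmodZ Rep.
Hypothesis hdA : derivation dA.
Hypothesis no_log : without_logarithm dA.
Hypothesis no_exp : without_exponents Rep dA.
Variables (EL : comNzRingType) (jL : {rmorphism L -> EL}) (tpL : K -> EL) (lL : EL) (dEL : EL -> EL).
Hypothesis hEL : E_model Rep tL dL jL tpL lL dEL.
Variables (EA : comNzRingType) (jA : {rmorphism A -> EA}) (tpA : K -> EA) (lA : EA) (dEA : EA -> EA).
Hypothesis hEA : E_model Rep (iota tL) dA jA tpA lA dEA.

Lemma regsing_gauge_const_L n (H : 'M[L]_n) : regsing_mx jL dEL H ->
  exists C : 'M[K]_n, gauge_equivalent dL (map_mx (in_alg L) C) H.
Proof.
apply: (regsing_gauge_const hEL derivation_dL dL_scalar charK0 hRep).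
  exact: without_logarithm_sub.
exact: without_exponents_sub.
Qed.

Lemma regsing_scalar_extension n (H : 'M[L]_n) :
  regsing_mx jL dEL H -> regsing_mx jA dEA (map_mx iota H).
Proof.
move=> /regsing_gauge_const_L [C hC].
apply: (regsing_gauge hEA charK0 _ (regsing_const hEA dA_scalar charK0 C)).
by rewrite -map_iota_scalar; apply: gauge_equivalent_map hC.
Qed.

Lemma regsing_scalar_extension_faithful n1 n2 (H1 : 'M[L]_n1) (H2 : 'M[L]_n2) :
  regsing_mx jL dEL H1 -> regsing_mx jL dEL H2 ->
  forall F' : 'M[A]_(n2, n1), horizontal dA (map_mx iota H1) (map_mx iota H2) F' ->
  exists! F : 'M[L]_(n2, n1), horizontal dL H1 H2 F /\ map_mx iota F = F'.
Proof.
move=> /regsing_gauge_const_L [C1 [U1 [V1 [UV1 VU1 hU1]]]].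
move=> /regsing_gauge_const_L [C2 [U2 [V2 [UV2 VU2 hU2]]]] F' hF'.
have /horizontal_map := hU1 => /(_ _ _ iota hdA_ext); rewrite map_iota_scalar => hU1A.
have /horizontal_map := hU2 => /(_ _ _ iota hdA_ext); rewrite map_iota_scalar => hU2A.
have UV2A : map_mx iota U2 *m map_mx iota V2 = 1%:M by rewrite -map_mxM UV2 map_mx1.
have VU2A : map_mx iota V2 *m map_mx iota U2 = 1%:M by rewrite -map_mxM VU2 map_mx1.
have hV2A := horizontal_inv hdA UV2A VU2A hU2A.
have [F0 hF0] := laurent_mx_descent (horizontal_const_laurent hEA dA_scalar charK0 hdA hRep
  no_log no_exp iota_tL_unit (horizontal_mul hdA (horizontal_mul hdA hV2A hF') hU1A)).
have hiF : map_mx iota (U2 *m F0 *m V1) = F'.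
  rewrite !map_mxM -hF0 !mulmxA UV2A mul1mx -mulmxA -map_mxM UV1 map_mx1 mulmx1 //.
exists (U2 *m F0 *m V1); split; first by split => //; apply: horizontal_iotaE; rewrite hiF.
by move=> F [_ hF]; apply: (map_mx_injective iota_inj); rewrite hiF hF.
Qed.

Lemma regsing_scalar_extension_surjective n (G : 'M[A]_n) : regsing_mx jA dEA G ->
  exists n' (H : 'M[L]_n') (P : 'M[A]_(n, n')) (Q : 'M[A]_(n', n)),
    [/\ regsing_mx jL dEL H, P *m Q = 1%:M, Q *m P = 1%:M & horizontal dA (map_mx iota H) G P].
Proof.
move=> /(regsing_gauge_const hEA hdA dA_scalar charK0 hRep no_log no_exp) [C [U [V [UV VU hU]]]].
exists n, (map_mx (in_alg L) C), U, V; rewrite map_iota_scalar; split => //.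
exact: (regsing_const hEL dL_scalar charK0).
Qed.
End ScalarExtension.

Unset Implicit Arguments.

Theorem mainTheorem14
  (K : closedFieldType) (charK0 : [pchar K] =i pred0)
  (Rep : pred K) (hRep : reps_KmodZ Rep)
  (L : comAlgType K) (tL tLinv : L) (hL : laurent_ring tL tLinv)
  (dL : L -> L) (hdL : is_t_ddt tL dL)
  (A : comAlgType K) (iota : {rmorphism L -> A})
  (iota_lin : forall (k : K) (x : L), iota (k *: x) = k *: iota x)
  (iota_inj : injective iota)
  (dA : A -> A) (hdA : derivation dA)
  (hdA_ext : forall x : L, dA (iota x) = iota (dL x))
  (no_log : forall f : A, dA (dA f) = 0 <-> exists c : K, f = c%:A)
  (no_exp : forall (a : K) (f : A), Rep a -> a != 0 -> dA f + a *: f = 0 -> f = 0)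
  (EL : comNzRingType) (jL : {rmorphism L -> EL}) (tpL : K -> EL) (lL : EL)
  (dEL : EL -> EL) (hEL : E_model Rep tL dL jL tpL lL dEL)
  (EA : comNzRingType) (jA : {rmorphism A -> EA}) (tpA : K -> EA) (lA : EA)
  (dEA : EA -> EA) (hEA : E_model Rep (iota tL) dA jA tpA lA dEA) :
  (forall (M : lmodType A) (nabla : M -> M),
     is_diffmod dA nabla -> finite_free M ->
     (regular_singular jA dEA nabla <->
      exists n (b : 'I_n -> M) (G : 'M[A]_n),
        [/\ is_basis b, conn_matrix nabla b G & forall i j, exists c : K, G i j = c%:A]))
  /\
  (forall n (H : 'M[L]_n), regsing_mx jL dEL H -> regsing_mx jA dEA (map_mx iota H))
  /\
  (forall n1 n2 (H1 : 'M[L]_n1) (H2 : 'M[L]_n2),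
     regsing_mx jL dEL H1 -> regsing_mx jL dEL H2 ->
     forall F' : 'M[A]_(n2, n1),
       horizontal dA (map_mx iota H1) (map_mx iota H2) F' ->
       exists! F : 'M[L]_(n2, n1), horizontal dL H1 H2 F /\ map_mx iota F = F')
  /\
  (forall n (G : 'M[A]_n), regsing_mx jA dEA G ->
     exists n' (H : 'M[L]_n') (P : 'M[A]_(n, n')) (Q : 'M[A]_(n', n)),
       [/\ regsing_mx jL dEL H, P *m Q = 1%:M, Q *m P = 1%:M
         & horizontal dA (map_mx iota H) G P]).
Proof.
have dA_K := dA_scalar hdL iota_lin hdA_ext.
split; first by move=> M nabla hn _; exact: (regular_singularP hEA dA_K charK0 hdA hRep no_log no_exp hn).
split; first exact: (regsing_scalar_extension hdL iota_lin iota_inj hdA_ext charK0 hRep no_log no_exp hEL hEA).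
split; first exact: (regsing_scalar_extension_faithful hL hdL iota_lin iota_inj hdA_ext charK0 hRep hdA
  no_log no_exp hEL hEA).
exact: (regsing_scalar_extension_surjective hdL iota_lin hdA_ext charK0 hRep hdA no_log no_exp hEL hEA).
Qed.
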